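(* Consider two patches with $p=d_{12}$, $q=d_{21}$, $0<p,q<1$, in an environment alternating deterministically $e_1,e_2,e_1,e_2,\dots$ starting with $e_1$ at generation $0$. Write $M_1=m_1(e_1)$, $M_2=m_1(e_2)$, $m_1=m_2(e_1)$, $m_2=m_2(e_2)$, all positive and finite, and assume the offspring laws are not such that every individual has exactly one offspring almost surely. Then the metapopulation persists with positive probability if and only if $$ M_1M_2(1-p)^2+(M_1m_2+m_1M_2)pq+m_1m_2(1-q)^2>\min\big(2,\;1+M_1M_2m_1m_2(1-p-q)^2\big). $$
   Context: Model with environment: at each generation the environment is in a state $w$; every individual living in patch $i$ independently produces a random number of offspring with mean $m_i(w)$ (depending on the current environment state), and each offspring independently moves from patch $i$ to patch $j$ with probability $d_{ij}$ (dispersal does not depend on the environment). Here $d_{11}=1-p$, $d_{12}=p$, $d_{21}=q$, $d_{22}=1-q$. Persistence with positive probability means the total population is nonzero at all generations with positive probability (starting from one individual in either patch). *)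

From Stdlib Require Import Reals ClassicalEpsilon.
Open Scope R_scope.

Definition is_law (pi : nat -> R) : Prop :=
  (forall k, 0 <= pi k) /\ infinite_sum pi 1.

Definition has_mean (pi : nat -> R) (m : R) : Prop :=
  infinite_sum (fun k => INR k * pi k) m.

Definition pgf (pi : nat -> R) (s : R) : R :=
  epsilon (inhabits 0) (fun l => infinite_sum (fun k => pi k * s ^ k) l).

(* Environment at generation t: true = e1, false = e2 (alternating, e1 at 0). *)
Definition env (t : nat) : bool := Nat.even t.

(* L patch envstate : offspring law; patch true = patch 1, false = patch 2;
   envstate true = e1, false = e2.
   ext L p q n t = (a, b) where a (resp. b) is the probability that the
   descendance of one individual living in patch 1 (resp. patch 2) at
   generation t is extinct at generation t + n.  Offspring of an individual
   in patch 1 go to patch 2 with probability p, offspring of an individual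
   in patch 2 go to patch 1 with probability q, independently. *)
Fixpoint ext (L : bool -> bool -> nat -> R) (p q : R) (n t : nat) : R * R :=
  match n with
  | O => (0, 0)
  | S n' =>
      let ab := ext L p q n' (S t) in
      (pgf (L true (env t)) ((1 - p) * fst ab + p * snd ab),
       pgf (L false (env t)) (q * fst ab + (1 - q) * snd ab))
  end.

(* Persistence with positive probability starting from one individual in
   patch i at generation 0: P(Z_n <> 0) stays bounded below by some delta > 0
   for all n (equivalently, P(Z_n <> 0 for all n) > 0). *)
Definition persists (L : bool -> bool -> nat -> R) (p q : R) (i : bool) : Prop :=
  exists delta, 0 < delta /\
    forall n, (if i then fst (ext L p q n 0) else snd (ext L p q n 0)) <= 1 - delta.

From Stdlib Require Import Reals Lra Lia Psatz ClassicalEpsilon Classical.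
Open Scope R_scope.

(* Write [u_n] for the pair of survival probabilities up to generation [n] of
   a line started in patch 1 or 2.  Two generations (e1, then e2) give
   [u_(n+2) = two_step u_n], where [two_step] is monotone and built from the
   maps [h |-> 1 - f (1 - h)], [f] a pgf, and from dispersal averages.  Near 0
   it is [A u + O(u^2)] with [A] the two-step mean matrix, which has positive
   off-diagonal entries; the stated inequality says [rho(A) > 1].
   If so, [A v > v] for some [v = (1, t)], [t > 0], and for small [eps] the
   level [eps v] is pushed up by [two_step], so [u_(2n) >= eps v] for all [n].
   Otherwise the nonnegative row vector [w = (1 - A22, A12)] has [w A <= w].
   While [u] stays above some [delta > 0], the defect [m h - (1 - f (1 - h)) >= c h^2]
   (or, when every law charges only 0 and 1 child, [det (I - A) > 0]) makes
   [w . u_(2n)] drop by a fixed amount at each step: impossible, as it is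
   nonnegative. *)

Lemma infinite_sum_lin a b la lb x y :
  infinite_sum a la -> infinite_sum b lb ->
  infinite_sum (fun k => x * a k + y * b k) (x * la + y * lb).
Proof.
  intros Ha Hb.
  assert (Hcst : forall z, Un_cv (fun _ => z) z).
  { intros z eps Heps; exists 0%nat; intros; rewrite R_dist_eq; lra. }
  change (Un_cv (fun n => sum_f_R0 (fun k => x * a k + y * b k) n) (x * la + y * lb)).
  apply Un_cv_ext with (fun n => x * sum_f_R0 a n + y * sum_f_R0 b n).
  - intro n; induction n as [|n IH]; simpl; [ring | rewrite <- IH; ring].
  - apply CV_plus; apply CV_mult; auto.
Qed.

Lemma infinite_sum_ext a b l :
  (forall k, a k = b k) -> infinite_sum a l -> infinite_sum b l.
Proof.
  intros Hab Ha.
  apply (Un_cv_ext (fun n => sum_f_R0 a n)); [|exact Ha].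
  intro n; apply sum_eq; auto.
Qed.

Lemma infinite_sum_le a b la lb :
  (forall k, a k <= b k) -> infinite_sum a la -> infinite_sum b lb -> la <= lb.
Proof.
  intros Hab Ha Hb.
  apply (Rle_cv_lim (Un := fun n => sum_f_R0 a n) (Vn := fun n => sum_f_R0 b n)); auto.
  intro n; apply sum_Rle; auto.
Qed.

Lemma infinite_sum_term_le a l k :
  (forall n, 0 <= a n) -> infinite_sum a l -> a k <= l.
Proof.
  intros Hpos Ha. apply Rle_trans with (sum_f_R0 a k); [|apply sum_incr; auto].
  destruct k as [|k]; simpl; [lra|].
  pose proof (cond_pos_sum a k Hpos); lra.
Qed.

Lemma pow_le_1 s k : 0 <= s <= 1 -> s ^ k <= 1.
Proof. intros Hs; rewrite <- (pow1 k); apply pow_incr; lra. Qed.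

Lemma pgf_term_bounds pi s k : is_law pi -> 0 <= s <= 1 -> 0 <= pi k * s ^ k <= pi k.
Proof.
  intros [Hpos _] Hs. pose proof (Hpos k). pose proof (pow_le s k (proj1 Hs)).
  pose proof (pow_le_1 s k Hs). nra.
Qed.

Lemma pgf_sum pi s : is_law pi -> 0 <= s <= 1 ->
  infinite_sum (fun k => pi k * s ^ k) (pgf pi s).
Proof.
  intros Hlaw Hs. pose proof (fun k => pgf_term_bounds pi s k Hlaw Hs) as Hterm.
  destruct Hlaw as [Hpos Hsum]. unfold pgf. apply epsilon_spec.
  assert (Hgrow : Un_growing (fun n => sum_f_R0 (fun k => pi k * s ^ k) n)).
  { intro n; cbn [sum_f_R0]. pose proof (Hterm (S n)); lra. }
  assert (Hub : has_ub (fun n => sum_f_R0 (fun k => pi k * s ^ k) n)).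
  { exists 1. intros x [n ->]. apply Rle_trans with (sum_f_R0 pi n).
    - apply sum_Rle. intros k _. apply Hterm.
    - apply sum_incr; auto. }
  destruct (growing_cv _ Hgrow Hub) as [l Hl]. exists l. exact Hl.
Qed.

Lemma pgf_bounds pi s : is_law pi -> 0 <= s <= 1 -> 0 <= pgf pi s <= 1.
Proof.
  intros Hlaw Hs. pose proof (pgf_sum pi s Hlaw Hs) as Hpgf.
  pose proof (fun k => pgf_term_bounds pi s k Hlaw Hs) as Hterm.
  split.
  - apply Rle_trans with (pi 0%nat * s ^ 0); [apply Hterm|].
    apply (infinite_sum_term_le (fun k => pi k * s ^ k)); auto. apply Hterm.
  - apply (infinite_sum_le _ _ _ _ (fun k => proj2 (Hterm k)) Hpgf (proj2 Hlaw)).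
Qed.

Lemma pgf_le_compat pi s t : is_law pi -> 0 <= s -> s <= t -> t <= 1 ->
  pgf pi s <= pgf pi t.
Proof.
  intros Hlaw Hs Hst Ht.
  apply (infinite_sum_le (fun k => pi k * s ^ k) (fun k => pi k * t ^ k));
    try (apply pgf_sum; auto; lra).
  intro k. apply Rmult_le_compat_l; [apply Hlaw | apply pow_incr; lra].
Qed.

(* If each child survives independently with probability [h], a parent with
   offspring law [pi] has a surviving child with probability [surv pi h]. *)
Definition surv (pi : nat -> R) (h : R) : R := 1 - pgf pi (1 - h).

Lemma surv_bounds pi h : is_law pi -> 0 <= h <= 1 -> 0 <= surv pi h <= 1.
Proof. intros Hlaw Hh. pose proof (pgf_bounds pi (1 - h) Hlaw ltac:(lra)). unfold surv; lra. Qed.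

Lemma surv_le_compat pi h h' : is_law pi -> 0 <= h -> h <= h' -> h' <= 1 ->
  surv pi h <= surv pi h'.
Proof.
  intros Hlaw H0 Hhh' H1. pose proof (pgf_le_compat pi (1 - h') (1 - h) Hlaw).
  unfold surv; lra.
Qed.

Lemma surv_sum pi h : is_law pi -> 0 <= h <= 1 ->
  infinite_sum (fun j => pi j * (1 - (1 - h) ^ j)) (surv pi h).
Proof.
  intros Hlaw Hh. pose proof (pgf_sum pi (1 - h) Hlaw ltac:(lra)) as Hpgf.
  apply (infinite_sum_ext (fun j => 1 * pi j + -1 * (pi j * (1 - h) ^ j))).
  - intro j; ring.
  - unfold surv. replace (1 - pgf pi (1 - h)) with (1 * 1 + -1 * pgf pi (1 - h)) by ring.
    apply infinite_sum_lin; [apply Hlaw | exact Hpgf].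
Qed.

Lemma pow_1m_ge h j : 0 <= h <= 1 -> 1 - INR j * h <= (1 - h) ^ j.
Proof.
  intros Hh. induction j as [|j IH]; [simpl; lra|].
  rewrite S_INR; cbn [pow]. pose proof (pos_INR j). nra.
Qed.

Lemma pow_1m_ge_sq h j : 0 <= h <= 1 -> (2 <= j)%nat -> 1 - INR j * h + h ^ 2 <= (1 - h) ^ j.
Proof.
  intros Hh Hj. induction Hj as [|j Hj IH]; [simpl; lra|].
  rewrite S_INR; cbn [pow].
  assert (2 <= INR j) by (apply (le_INR 2); lia).
  assert (0 <= (1 - h) * ((1 - h) ^ j - (1 - INR j * h + h ^ 2))) by (apply Rmult_le_pos; lra).
  assert (0 <= h * h * (INR j - h)) by (apply Rmult_le_pos; [nra | lra]).
  nra.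
Qed.

Lemma pow_1m_le h j : 0 <= h <= 1 -> (1 - h) ^ j <= 1 - INR j * h + INR j ^ 2 * h ^ 2.
Proof.
  intros Hh. induction j as [|j IH]; [simpl; lra|].
  rewrite S_INR; cbn [pow]. pose proof (pos_INR j). nra.
Qed.

Section SurvivalMap.
Variables (pi : nat -> R) (m : R).
Hypotheses (Hlaw : is_law pi) (Hmean : has_mean pi m).

Lemma mean_sub_surv_sum h : 0 <= h <= 1 ->
  infinite_sum (fun j => pi j * (INR j * h - 1 + (1 - h) ^ j)) (m * h - surv pi h).
Proof.
  intros Hh.
  apply (infinite_sum_ext (fun j => h * (INR j * pi j) + -1 * (pi j * (1 - (1 - h) ^ j)))).
  - intro j; ring.
  - replace (m * h - surv pi h) with (h * m + -1 * surv pi h) by ring.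
    apply infinite_sum_lin; [exact Hmean | apply surv_sum; auto].
Qed.

Lemma mean_sub_surv_term_nonneg h j : 0 <= h <= 1 ->
  0 <= pi j * (INR j * h - 1 + (1 - h) ^ j).
Proof. intros Hh. pose proof (proj1 Hlaw j). pose proof (pow_1m_ge h j Hh). nra. Qed.

Lemma surv_le_mean h : 0 <= h <= 1 -> surv pi h <= m * h.
Proof.
  intros Hh.
  pose proof (infinite_sum_term_le _ _ 0%nat (fun j => mean_sub_surv_term_nonneg h j Hh)
                (mean_sub_surv_sum h Hh)).
  simpl in *; lra.
Qed.

Lemma surv_le_mean_sub_sq h k : 0 <= h <= 1 -> (2 <= k)%nat ->
  surv pi h <= m * h - pi k * h ^ 2.
Proof.
  intros Hh Hk.
  pose proof (infinite_sum_term_le _ _ k (fun j => mean_sub_surv_term_nonneg h j Hh)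
                (mean_sub_surv_sum h Hh)).
  pose proof (pow_1m_ge_sq h k Hh Hk). pose proof (proj1 Hlaw k). nra.
Qed.

Lemma mean_of_at_most_one_child :
  (forall k, (2 <= k)%nat -> pi k = 0) -> m = pi 1%nat /\ pi 1%nat <= 1.
Proof.
  intros Hmore. split.
  - apply (uniqueness_sum _ _ _ Hmean). intros eps Heps. exists 1%nat. intros n Hn.
    replace (sum_f_R0 (fun k => INR k * pi k) n) with (pi 1%nat).
    + rewrite R_dist_eq; lra.
    + induction Hn as [|n Hn IH]; [simpl; ring|].
      cbn [sum_f_R0]. rewrite (Hmore (S n)) by lia. rewrite <- IH. ring.
  - apply (infinite_sum_term_le pi 1 1%nat); apply Hlaw.
Qed.

Lemma surv_quadratic_bound : exists c, 0 <= c /\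
  (forall h, 0 <= h <= 1 -> surv pi h <= m * h - c * h ^ 2) /\
  (0 < c \/ (m = pi 1%nat /\ pi 1%nat <= 1)).
Proof.
  destruct (classic (exists k, (2 <= k)%nat /\ 0 < pi k)) as [[k [Hk Hpk]] | Hnone].
  - exists (pi k). split; [lra|]. split; [|left; lra].
    intros h Hh. apply surv_le_mean_sub_sq; auto.
  - exists 0. split; [lra|]. split.
    + intros h Hh. pose proof (surv_le_mean h Hh). lra.
    + right. apply mean_of_at_most_one_child. intros k Hk.
      pose proof (proj1 Hlaw k).
      destruct (Rle_lt_dec (pi k) 0); [lra|]. exfalso. apply Hnone. exists k; auto.
Qed.

Lemma surv_ge_near_0 eta : 0 < eta ->
  exists h0, 0 < h0 <= 1 /\ forall h, 0 <= h <= h0 -> (m - eta) * h <= surv pi h.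
Proof.
  intros Heta.
  destruct (Hmean (eta / 2) ltac:(lra)) as [N HN]. specialize (HN N (le_n N)).
  apply Rabs_def2 in HN.
  set (S := sum_f_R0 (fun k => INR k * pi k) N) in HN.
  set (K := INR N ^ 2).
  assert (HK : 0 <= K) by (unfold K; nra).
  exists (Rmin 1 (eta / (2 * (K + 1)))).
  split; [split; [apply Rmin_glb_lt; [lra | apply Rdiv_lt_0_compat; lra] | apply Rmin_l]|].
  intros h Hh.
  assert (Hh1 : h <= 1) by (pose proof (Rmin_l 1 (eta / (2 * (K + 1)))); lra).
  assert (HKh : K * h <= eta / 2).
  { assert (h * (2 * (K + 1)) <= eta).
    { pose proof (Rmin_r 1 (eta / (2 * (K + 1)))).
      replace eta with (eta / (2 * (K + 1)) * (2 * (K + 1))) by (field; lra).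
      apply Rmult_le_compat_r; lra. }
    nra. }
  (* Truncate the series of [surv pi h] at [N], where [(1-h)^j <= 1 - j h + N^2 h^2]. *)
  assert (Htrunc : h * S - K * h ^ 2 * sum_f_R0 pi N <= surv pi h).
  { assert (Hlin : forall n, sum_f_R0 (fun j => h * (INR j * pi j) - K * h ^ 2 * pi j) n
                     = h * sum_f_R0 (fun k => INR k * pi k) n - K * h ^ 2 * sum_f_R0 pi n).
    { intro n; induction n as [|n IH]; cbn [sum_f_R0]; [ring | rewrite IH; ring]. }
    unfold S; rewrite <- (Hlin N).
    apply Rle_trans with (sum_f_R0 (fun j => pi j * (1 - (1 - h) ^ j)) N).
    - apply sum_Rle. intros j Hj.
      pose proof (proj1 Hlaw j). pose proof (pow_1m_le h j ltac:(lra)).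
      assert (INR j ^ 2 <= K)
        by (pose proof (le_INR _ _ Hj); pose proof (pos_INR j); unfold K; nra).
      assert (pi j * (INR j ^ 2 * h ^ 2) <= pi j * (K * h ^ 2)) by (apply Rmult_le_compat_l; nra).
      nra.
    - apply sum_incr; [apply surv_sum; [exact Hlaw | lra]|].
      intro j. pose proof (proj1 Hlaw j). pose proof (pow_le_1 (1 - h) j ltac:(lra)). nra. }
  pose proof (sum_incr pi N 1 (proj2 Hlaw) (proj1 Hlaw)).
  pose proof (cond_pos_sum pi N (proj1 Hlaw)).
  assert (0 <= K * h ^ 2 * (1 - sum_f_R0 pi N)) by (apply Rmult_le_pos; nra).
  nra.
Qed.

Lemma surv_ge_pos delta : 0 < m -> 0 < delta <= 1 ->
  exists beta, 0 < beta /\ forall h, delta <= h <= 1 -> beta <= surv pi h.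
Proof.
  intros Hm Hdelta. destruct (surv_ge_near_0 (m / 2) ltac:(lra)) as [h0 [Hh0 Hnear]].
  pose proof (Rmin_l delta h0). pose proof (Rmin_r delta h0).
  set (x := Rmin delta h0) in *.
  assert (Hx : 0 < x) by (apply Rmin_glb_lt; lra).
  exists (m / 2 * x). split; [apply Rmult_lt_0_compat; lra|].
  intros h Hh. pose proof (Hnear x ltac:(lra)).
  pose proof (surv_le_compat pi x h Hlaw ltac:(lra) ltac:(lra) ltac:(lra)).
  replace (m - m / 2) with (m / 2) in * by field. lra.
Qed.
End SurvivalMap.

Lemma supercritical_right_vector a b c d : 0 < b -> 0 < c ->
  a + d > Rmin 2 (1 + (a * d - b * c)) ->
  exists t, 0 < t /\ a + b * t > 1 /\ c + d * t > t.
Proof.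
  intros Hb Hc Hsup.
  destruct (Rle_lt_dec 1 d) as [Hd | Hd].
  - pose proof (Rle_abs (1 - a)). pose proof (Rabs_pos (1 - a)).
    exists ((Rabs (1 - a) + 1) / b).
    assert (Ht : b * ((Rabs (1 - a) + 1) / b) = Rabs (1 - a) + 1) by (field; lra).
    assert (0 < (Rabs (1 - a) + 1) / b) by (apply Rdiv_lt_0_compat; lra).
    split; [lra|]. split; nra.
  - assert (Hdet : (1 - a) * (1 - d) < b * c).
    { assert (0 < b * c) by nra.
      destruct (Rle_lt_dec 1 a).
      { assert (0 <= (a - 1) * (1 - d)) by (apply Rmult_le_pos; lra). nra. }
      unfold Rmin in Hsup; destruct (Rle_dec 2 (1 + (a * d - b * c))); nra. }
    set (r := c / (1 - d)). set (s := (1 - a) / b).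
    assert (Hr : r * (1 - d) = c) by (unfold r; field; lra).
    assert (Hs : s * b = 1 - a) by (unfold s; field; lra).
    assert (Hsr : s < r).
    { apply (Rmult_lt_reg_r (b * (1 - d))); [nra|].
      replace (s * (b * (1 - d))) with ((1 - a) * (1 - d)) by (rewrite <- Hs; ring).
      replace (r * (b * (1 - d))) with (b * c) by (rewrite <- Hr; ring). exact Hdet. }
    assert (0 < r) by (apply (Rmult_lt_reg_r (1 - d)); lra).
    pose proof (Rmax_l 0 s). pose proof (Rmax_r 0 s).
    assert (Rmax 0 s < r) by (apply Rmax_lub_lt; lra).
    exists ((Rmax 0 s + r) / 2). split; [lra|]. split; nra.
Qed.

Lemma subcritical_of_not_supercritical a b c d : 0 < b -> 0 < c ->
  a + d <= Rmin 2 (1 + (a * d - b * c)) ->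
  a < 1 /\ d < 1 /\ b * c <= (1 - a) * (1 - d).
Proof.
  intros Hb Hc Hsub.
  pose proof (Rmin_l 2 (1 + (a * d - b * c))). pose proof (Rmin_r 2 (1 + (a * d - b * c))).
  assert (0 < b * c) by nra.
  assert (a < 1) by nra. assert (d < 1) by nra. lra.
Qed.

Lemma product_lower_margin X Y Z x y r :
  0 < X -> 0 < Y -> 0 < Z -> 0 <= x -> 0 <= y -> r < X * (x * Y + y * Z) ->
  exists eta0, 0 < eta0 <= X /\
    forall eta, 0 <= eta <= eta0 -> r <= (X - eta) * (x * (Y - eta) + y * (Z - eta)).
Proof.
  intros HX HY HZ Hx Hy Hr.
  set (K := x * Y + y * Z + X * (x + y) + 1).
  assert (HK : 1 <= K) by (unfold K; nra).
  set (g := X * (x * Y + y * Z) - r).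
  pose proof (Rmin_l X (g / K)). pose proof (Rmin_r X (g / K)).
  exists (Rmin X (g / K)). split.
  - split; [apply Rmin_glb_lt; [lra | apply Rdiv_lt_0_compat; unfold g; lra] | lra].
  - intros eta Heta.
    assert (eta * K <= g).
    { replace g with (g / K * K) by (field; lra). apply Rmult_le_compat_r; lra. }
    assert (0 <= eta ^ 2 * (x + y)) by (apply Rmult_le_pos; nra).
    unfold K, g in *. nra.
Qed.

Lemma nonneg_not_decreasing_by kappa (phi : nat -> R) :
  0 < kappa -> (forall n, 0 <= phi n) -> ~ (forall n, phi (S n) <= phi n - kappa).
Proof.
  intros Hk Hpos Hdec.
  assert (Hiter : forall n, phi n <= phi 0%nat - INR n * kappa).
  { induction n as [|n IH]; [simpl; lra|]. rewrite S_INR. pose proof (Hdec n). lra. }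
  destruct (INR_archimed kappa (phi 0%nat) Hk) as [N HN].
  pose proof (Hiter N). pose proof (Hpos N). lra.
Qed.

Section Metapopulation.
Variables (L : bool -> bool -> nat -> R) (p q M1 M2 m1 m2 : R).
Hypotheses (Hp : 0 < p < 1) (Hq : 0 < q < 1) (Hlaw : forall i e, is_law (L i e))
  (HM1 : has_mean (L true true) M1) (HM2 : has_mean (L true false) M2)
  (Hm1 : has_mean (L false true) m1) (Hm2 : has_mean (L false false) m2)
  (PM1 : 0 < M1) (PM2 : 0 < M2) (Pm1 : 0 < m1) (Pm2 : 0 < m2).

Definition mean (i e : bool) : R :=
  if i then (if e then M1 else M2) else (if e then m1 else m2).

Lemma has_mean_mean i e : has_mean (L i e) (mean i e).
Proof. destruct i, e; assumption. Qed.

Lemma mean_pos i e : 0 < mean i e.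
Proof. destruct i, e; assumption. Qed.

Definition to1 (i : bool) : R := if i then 1 - p else q.

Lemma to1_bounds i : 0 < to1 i < 1.
Proof. destruct i; simpl; lra. Qed.

(* If a line started in patch [j] survives with probability [u_j], a child of
   a parent living in patch [i] survives with probability [disp i u1 u2]. *)
Definition disp (i : bool) (u1 u2 : R) : R := to1 i * u1 + (1 - to1 i) * u2.

Lemma disp_bounds i u1 u2 lo hi :
  lo <= u1 <= hi -> lo <= u2 <= hi -> lo <= disp i u1 u2 <= hi.
Proof. intros H1 H2. pose proof (to1_bounds i). unfold disp; split; nra. Qed.

Lemma disp_le_compat i u1 u2 v1 v2 : u1 <= v1 -> u2 <= v2 -> disp i u1 u2 <= disp i v1 v2.
Proof. intros H1 H2. pose proof (to1_bounds i). unfold disp; nra. Qed.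

Definition step (i e : bool) (u1 u2 : R) : R := surv (L i e) (disp i u1 u2).

Definition two_step (i : bool) (u1 u2 : R) : R :=
  step i true (step true false u1 u2) (step false false u1 u2).

Lemma step_bounds i e u1 u2 : 0 <= u1 <= 1 -> 0 <= u2 <= 1 -> 0 <= step i e u1 u2 <= 1.
Proof. intros H1 H2. apply surv_bounds; [apply Hlaw | apply disp_bounds; auto]. Qed.

Lemma step_le_compat i e u1 u2 v1 v2 :
  0 <= u1 <= v1 -> 0 <= u2 <= v2 -> v1 <= 1 -> v2 <= 1 -> step i e u1 u2 <= step i e v1 v2.
Proof.
  intros H1 H2 H1' H2'. apply surv_le_compat; [apply Hlaw | | apply disp_le_compat; lra | ].
  - apply disp_bounds with (hi := 1); lra.
  - apply disp_bounds with (lo := 0); lra.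
Qed.

Lemma two_step_le_compat i u1 u2 v1 v2 :
  0 <= u1 <= v1 -> 0 <= u2 <= v2 -> v1 <= 1 -> v2 <= 1 -> two_step i u1 u2 <= two_step i v1 v2.
Proof.
  intros H1 H2 H1' H2'. unfold two_step.
  pose proof (step_bounds true false u1 u2 ltac:(lra) ltac:(lra)).
  pose proof (step_bounds false false u1 u2 ltac:(lra) ltac:(lra)).
  pose proof (step_bounds true false v1 v2 ltac:(lra) ltac:(lra)).
  pose proof (step_bounds false false v1 v2 ltac:(lra) ltac:(lra)).
  pose proof (step_le_compat true false u1 u2 v1 v2 H1 H2 H1' H2').
  pose proof (step_le_compat false false u1 u2 v1 v2 H1 H2 H1' H2').
  apply step_le_compat; lra.
Qed.

Definition extinct (i : bool) (n t : nat) : R :=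
  if i then fst (ext L p q n t) else snd (ext L p q n t).

Lemma extinct_succ i n t :
  extinct i (S n) t = 1 - step i (env t) (1 - extinct true n (S t)) (1 - extinct false n (S t)).
Proof.
  assert (Hpgf : forall P x y, x = y -> pgf P x = 1 - (1 - pgf P y)).
  { intros P x y ->. ring. }
  destruct i; unfold extinct, step, surv, disp; simpl; apply Hpgf; ring.
Qed.

Lemma extinct_period2 i n t : extinct i n (S (S t)) = extinct i n t.
Proof.
  revert i t. induction n as [|n IH]; intros i t; [destruct i; reflexivity|].
  rewrite !extinct_succ, !IH. reflexivity.
Qed.

Lemma extinct_bounds i n t : 0 <= extinct i n t <= 1.
Proof.
  revert i t. induction n as [|n IH]; intros i t.
  - destruct i; simpl; lra.
  - rewrite extinct_succ.
    pose proof (step_bounds i (env t) (1 - extinct true n (S t)) (1 - extinct false n (S t))).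
    pose proof (IH true (S t)). pose proof (IH false (S t)). lra.
Qed.

Lemma extinct_le_succ i n t : extinct i n t <= extinct i (S n) t.
Proof.
  revert i t. induction n as [|n IH]; intros i t.
  - pose proof (extinct_bounds i 1 t). destruct i; simpl in *; lra.
  - rewrite (extinct_succ i n), (extinct_succ i (S n)).
    pose proof (IH true (S t)). pose proof (IH false (S t)).
    pose proof (extinct_bounds true n (S t)). pose proof (extinct_bounds false n (S t)).
    pose proof (extinct_bounds true (S n) (S t)). pose proof (extinct_bounds false (S n) (S t)).
    pose proof (step_le_compat i (env t)
                  (1 - extinct true (S n) (S t)) (1 - extinct false (S n) (S t))
                  (1 - extinct true n (S t)) (1 - extinct false n (S t))).
    lra.
Qed.

Lemma extinct_le_mono i n n' t : (n <= n')%nat -> extinct i n t <= extinct i n' t.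
Proof.
  induction 1 as [|n' _ IH]; [lra|]. pose proof (extinct_le_succ i n' t). lra.
Qed.

Lemma survival_two_step i n :
  1 - extinct i (S (S n)) 0 = two_step i (1 - extinct true n 0) (1 - extinct false n 0).
Proof.
  rewrite extinct_succ, !extinct_succ, !extinct_period2. unfold two_step. simpl env.
  assert (Hinv : forall x, 1 - (1 - x) = x) by (intro; ring).
  rewrite !Hinv. reflexivity.
Qed.

Definition lin_step (i e : bool) (u1 u2 : R) : R := mean i e * disp i u1 u2.

Definition lin_two_step (i : bool) (u1 u2 : R) : R :=
  lin_step i true (lin_step true false u1 u2) (lin_step false false u1 u2).

(* The mean matrix of two generations: [diag(M1, m1) P diag(M2, m2) P],
   with [P] the dispersal matrix. *)
Definition A11 : R := lin_two_step true 1 0.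
Definition A12 : R := lin_two_step true 0 1.
Definition A21 : R := lin_two_step false 1 0.
Definition A22 : R := lin_two_step false 0 1.

Lemma lin_two_step_matrix u1 u2 :
  lin_two_step true u1 u2 = A11 * u1 + A12 * u2 /\
  lin_two_step false u1 u2 = A21 * u1 + A22 * u2.
Proof. unfold A11, A12, A21, A22, lin_two_step, lin_step, disp; simpl; split; ring. Qed.

Lemma lin_step_nonneg i e x y : 0 <= x -> 0 <= y -> 0 <= lin_step i e x y.
Proof.
  intros Hx Hy. pose proof (mean_pos i e). pose proof (to1_bounds i).
  unfold lin_step, disp. apply Rmult_le_pos; nra.
Qed.

Lemma lin_step_pos i e x y : 0 <= x -> 0 <= y -> 0 < x + y -> 0 < lin_step i e x y.
Proof.
  intros Hx Hy Hxy. pose proof (mean_pos i e). pose proof (to1_bounds i).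
  unfold lin_step, disp. apply Rmult_lt_0_compat; [lra|].
  destruct (Rlt_or_le 0 x).
  - assert (0 < to1 i * x) by (apply Rmult_lt_0_compat; lra).
    assert (0 <= (1 - to1 i) * y) by (apply Rmult_le_pos; lra). lra.
  - assert (0 < (1 - to1 i) * y) by (apply Rmult_lt_0_compat; lra).
    assert (0 <= to1 i * x) by (apply Rmult_le_pos; lra). lra.
Qed.

Lemma A12_pos : 0 < A12.
Proof.
  unfold A12, lin_two_step.
  apply lin_step_pos; try apply lin_step_nonneg; try lra.
  pose proof (lin_step_pos true false 0 1 ltac:(lra) ltac:(lra) ltac:(lra)).
  pose proof (lin_step_nonneg false false 0 1 ltac:(lra) ltac:(lra)). lra.
Qed.

Lemma A21_pos : 0 < A21.
Proof.
  unfold A21, lin_two_step.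
  apply lin_step_pos; try apply lin_step_nonneg; try lra.
  pose proof (lin_step_pos true false 1 0 ltac:(lra) ltac:(lra) ltac:(lra)).
  pose proof (lin_step_nonneg false false 1 0 ltac:(lra) ltac:(lra)). lra.
Qed.

Lemma surv_ge_near_0_uniform eta : 0 < eta -> exists h0, 0 < h0 <= 1 /\
  forall i e h, 0 <= h <= h0 -> (mean i e - eta) * h <= surv (L i e) h.
Proof.
  intros Heta.
  assert (Hnear : forall i e, exists h0, 0 < h0 <= 1 /\
            forall h, 0 <= h <= h0 -> (mean i e - eta) * h <= surv (L i e) h).
  { intros i e. apply surv_ge_near_0; [apply Hlaw | apply has_mean_mean | exact Heta]. }
  destruct (Hnear true true) as [h1 [Hh1 H1]]. destruct (Hnear true false) as [h2 [Hh2 H2]].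
  destruct (Hnear false true) as [h3 [Hh3 H3]]. destruct (Hnear false false) as [h4 [Hh4 H4]].
  pose proof (Rmin_l (Rmin h1 h2) (Rmin h3 h4)). pose proof (Rmin_r (Rmin h1 h2) (Rmin h3 h4)).
  pose proof (Rmin_l h1 h2). pose proof (Rmin_r h1 h2).
  pose proof (Rmin_l h3 h4). pose proof (Rmin_r h3 h4).
  exists (Rmin (Rmin h1 h2) (Rmin h3 h4)).
  split; [split; [repeat apply Rmin_glb_lt | ]; lra|].
  intros [] [] h Hh; [apply H1 | apply H2 | apply H3 | apply H4]; lra.
Qed.

Lemma lin_two_step_margin i t r : 0 < t -> r < lin_two_step i 1 t ->
  exists eta0, 0 < eta0 <= mean i true /\ forall eta, 0 <= eta <= eta0 ->
    r <= (mean i true - eta) *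
         disp i ((M2 - eta) * disp true 1 t) ((m2 - eta) * disp false 1 t).
Proof.
  intros Ht Hr.
  assert (Hdisp : forall j, 0 < disp j 1 t)
    by (intro j; pose proof (to1_bounds j); unfold disp; nra).
  pose proof (to1_bounds i).
  destruct (product_lower_margin (mean i true) M2 m2 (to1 i * disp true 1 t)
              ((1 - to1 i) * disp false 1 t) r) as [eta0 [Heta0 Hmargin]];
    try (apply mean_pos || assumption || (apply Rmult_le_pos; [lra | apply Rlt_le, Hdisp])).
  - unfold lin_two_step, lin_step, disp at 1 in Hr. simpl mean in Hr. lra.
  - exists eta0. split; [exact Heta0|]. intros eta Heta.
    unfold disp at 1. specialize (Hmargin eta Heta). lra.
Qed.

Lemma two_step_ge_lin eta h0 eps t i :
  0 <= eta <= mean i true ->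
  (forall j e h, 0 <= h <= h0 -> (mean j e - eta) * h <= surv (L j e) h) ->
  h0 <= 1 -> 0 < t -> 0 <= eps -> eps * (1 + t) * (1 + M2 + m2) <= h0 ->
  eps * ((mean i true - eta) * disp i ((M2 - eta) * disp true 1 t) ((m2 - eta) * disp false 1 t))
  <= two_step i eps (eps * t).
Proof.
  intros Heta Hnear Hh01 Ht Heps Hh0.
  assert (0 <= eps * t) by (apply Rmult_le_pos; lra).
  assert (Hspread : 0 <= eps * (1 + t) <= eps * (1 + t) * (1 + M2 + m2)).
  { assert (0 <= eps * (1 + t)) by (apply Rmult_le_pos; lra).
    assert (0 <= eps * (1 + t) * (M2 + m2)) by (apply Rmult_le_pos; lra). lra. }
  assert (Hh : forall j, disp j eps (eps * t) = eps * disp j 1 t) by (intro j; unfold disp; ring).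
  assert (Hhb : forall j, 0 <= disp j eps (eps * t) <= eps * (1 + t))
    by (intro j; apply disp_bounds; nra).
  assert (Hmean : forall j, mean j false <= M2 + m2) by (intros []; simpl; lra).
  assert (Hy : forall j, (mean j false - eta) * disp j eps (eps * t) <= step j false eps (eps * t)
                         <= (M2 + m2) * (eps * (1 + t))).
  { intro j. unfold step. split; [apply Hnear; pose proof (Hhb j); lra|].
    pose proof (surv_le_mean _ _ (Hlaw j false) (has_mean_mean j false) (disp j eps (eps * t))
                  ltac:(pose proof (Hhb j); lra)).
    pose proof (mean_pos j false). pose proof (Hhb j).
    assert (mean j false * disp j eps (eps * t) <= (M2 + m2) * (eps * (1 + t)))
      by (apply Rmult_le_compat; lra || apply Hmean). lra. }
  assert (Hy0 : forall j, 0 <= step j false eps (eps * t)).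
  { intro j. apply step_bounds; lra. }
  set (z := disp i (step true false eps (eps * t)) (step false false eps (eps * t))).
  assert (Hz : 0 <= z <= h0).
  { assert (0 <= z <= (M2 + m2) * (eps * (1 + t)))
      by (apply disp_bounds; split; apply Hy0 || apply Hy).
    lra. }
  assert (Hlin : eps * disp i ((M2 - eta) * disp true 1 t) ((m2 - eta) * disp false 1 t) <= z).
  { replace (eps * disp i ((M2 - eta) * disp true 1 t) ((m2 - eta) * disp false 1 t))
      with (disp i ((mean true false - eta) * disp true eps (eps * t))
                   ((mean false false - eta) * disp false eps (eps * t)))
      by (rewrite !Hh; unfold disp; simpl mean; ring).
    apply disp_le_compat; apply Hy. }
  unfold two_step, step at 1. fold z.
  pose proof (Hnear i true z Hz).
  assert ((mean i true - eta)
            * (eps * disp i ((M2 - eta) * disp true 1 t) ((m2 - eta) * disp false 1 t))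
          <= (mean i true - eta) * z) by (apply Rmult_le_compat_l; lra).
  nra.
Qed.

Lemma two_step_expands t : 0 < t -> 1 < lin_two_step true 1 t -> t < lin_two_step false 1 t ->
  exists eps, 0 < eps /\ eps * (1 + t) <= 1 /\
    eps <= two_step true eps (eps * t) /\ eps * t <= two_step false eps (eps * t).
Proof.
  intros Ht H1 H2.
  destruct (lin_two_step_margin true t 1 Ht H1) as [eta1 [Heta1 Hmargin1]].
  destruct (lin_two_step_margin false t t Ht H2) as [eta2 [Heta2 Hmargin2]].
  pose proof (Rmin_l eta1 eta2). pose proof (Rmin_r eta1 eta2).
  set (eta := Rmin eta1 eta2) in *.
  assert (Heta : 0 < eta) by (apply Rmin_glb_lt; lra).
  destruct (surv_ge_near_0_uniform eta Heta) as [h0 [Hh0 Hnear]].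
  set (D := (1 + t) * (1 + M2 + m2)).
  assert (HD : 1 <= D) by (unfold D; nra).
  (* Small enough that every argument of [surv] below stays under [h0]. *)
  exists (h0 / D).
  assert (Heps : 0 < h0 / D) by (apply Rdiv_lt_0_compat; lra).
  assert (HepsD : h0 / D * (1 + t) * (1 + M2 + m2) = h0) by (unfold D; field; nra).
  split; [exact Heps|]. split.
  { assert (0 <= h0 / D * (1 + t) * (M2 + m2)) by (apply Rmult_le_pos; nra). nra. }
  split.
  - pose proof (two_step_ge_lin eta h0 (h0 / D) t true ltac:(lra) Hnear ltac:(lra) Ht
                  ltac:(lra) ltac:(lra)).
    pose proof (Hmargin1 eta ltac:(lra)). nra.
  - pose proof (two_step_ge_lin eta h0 (h0 / D) t false ltac:(lra) Hnear ltac:(lra) Ht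
                  ltac:(lra) ltac:(lra)).
    pose proof (Hmargin2 eta ltac:(lra)). nra.
Qed.

Lemma persists_of_supercritical :
  A11 + A22 > Rmin 2 (1 + (A11 * A22 - A12 * A21)) -> forall i, persists L p q i.
Proof.
  intros Hsup.
  destruct (supercritical_right_vector _ _ _ _ A12_pos A21_pos Hsup) as [t [Ht [H1 H2]]].
  destruct (lin_two_step_matrix 1 t) as [E1 E2].
  destruct (two_step_expands t Ht ltac:(lra) ltac:(lra)) as [eps [Heps [Hle [Hx1 Hx2]]]].
  assert (0 <= eps * t) by (apply Rmult_le_pos; lra).
  assert (Heven : forall n,
            eps <= 1 - extinct true (2 * n) 0 /\ eps * t <= 1 - extinct false (2 * n) 0).
  { induction n as [|n [IH1 IH2]]; [simpl; lra|].
    replace (2 * S n)%nat with (S (S (2 * n))) by lia.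
    rewrite !survival_two_step.
    pose proof (extinct_bounds true (2 * n) 0). pose proof (extinct_bounds false (2 * n) 0).
    split; [eapply Rle_trans; [exact Hx1|] | eapply Rle_trans; [exact Hx2|]];
      apply two_step_le_compat; lra. }
  intro i. exists (eps * Rmin 1 t).
  split; [apply Rmult_lt_0_compat; [lra | apply Rmin_glb_lt; lra]|].
  intro n. fold (extinct i n 0).
  destruct (Heven n) as [Hn1 Hn2].
  pose proof (extinct_le_mono i n (2 * n) 0 ltac:(lia)).
  pose proof (Rmin_l 1 t). pose proof (Rmin_r 1 t).
  assert (eps * Rmin 1 t <= eps * 1) by (apply Rmult_le_compat_l; lra).
  assert (eps * Rmin 1 t <= eps * t) by (apply Rmult_le_compat_l; lra).
  destruct i; lra.
Qed.

Lemma surv_quadratic_bound_uniform : exists c : bool -> bool -> R, forall i e,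
  0 <= c i e /\
  (forall h, 0 <= h <= 1 -> surv (L i e) h <= mean i e * h - c i e * h ^ 2) /\
  (0 < c i e \/ (mean i e = L i e 1%nat /\ L i e 1%nat <= 1)).
Proof.
  assert (Hquad : forall i e, exists c, 0 <= c /\
            (forall h, 0 <= h <= 1 -> surv (L i e) h <= mean i e * h - c * h ^ 2) /\
            (0 < c \/ (mean i e = L i e 1%nat /\ L i e 1%nat <= 1))).
  { intros i e. apply surv_quadratic_bound; [apply Hlaw | apply has_mean_mean]. }
  destruct (Hquad true true) as [c11 H11]. destruct (Hquad true false) as [c12 H12].
  destruct (Hquad false true) as [c21 H21]. destruct (Hquad false false) as [c22 H22].
  exists (fun i e : bool => if i then (if e then c11 else c12) else (if e then c21 else c22)).
  intros [] []; assumption.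
Qed.

Lemma surv_ge_pos_uniform delta : 0 < delta <= 1 -> exists beta, 0 < beta /\
  forall i e h, delta <= h <= 1 -> beta <= surv (L i e) h.
Proof.
  intros Hdelta.
  assert (Hpos : forall i e, exists beta, 0 < beta /\
            forall h, delta <= h <= 1 -> beta <= surv (L i e) h).
  { intros i e. apply (surv_ge_pos (L i e) (mean i e));
      [apply Hlaw | apply has_mean_mean | apply mean_pos | exact Hdelta]. }
  destruct (Hpos true true) as [b1 [Hb1 H1]]. destruct (Hpos true false) as [b2 [Hb2 H2]].
  destruct (Hpos false true) as [b3 [Hb3 H3]]. destruct (Hpos false false) as [b4 [Hb4 H4]].
  pose proof (Rmin_l (Rmin b1 b2) (Rmin b3 b4)). pose proof (Rmin_r (Rmin b1 b2) (Rmin b3 b4)).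
  pose proof (Rmin_l b1 b2). pose proof (Rmin_r b1 b2).
  pose proof (Rmin_l b3 b4). pose proof (Rmin_r b3 b4).
  exists (Rmin (Rmin b1 b2) (Rmin b3 b4)).
  split; [repeat apply Rmin_glb_lt; lra|].
  intros [] [] h Hh;
    [pose proof (H1 h Hh) | pose proof (H2 h Hh) | pose proof (H3 h Hh) | pose proof (H4 h Hh)];
    lra.
Qed.

Lemma step_le_lin_step_sub i e c delta u1 u2 :
  0 <= c -> (forall h, 0 <= h <= 1 -> surv (L i e) h <= mean i e * h - c * h ^ 2) ->
  0 <= delta -> delta <= u1 <= 1 -> delta <= u2 <= 1 ->
  step i e u1 u2 <= lin_step i e u1 u2 - c * delta ^ 2.
Proof.
  intros Hc Hquad Hdelta H1 H2.
  pose proof (disp_bounds i u1 u2 delta 1 H1 H2).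
  pose proof (Hquad (disp i u1 u2) ltac:(lra)).
  assert (c * delta ^ 2 <= c * disp i u1 u2 ^ 2)
    by (apply Rmult_le_compat_l; [lra | apply pow_incr; lra]).
  unfold step, lin_step. lra.
Qed.

Lemma det_gap_pos : (forall i e, mean i e <= 1) -> (exists i e, mean i e < 1) ->
  A12 * A21 < (1 - A11) * (1 - A22).
Proof.
  intros Hle [i0 [e0 Hlt]].
  set (r := fun i => mean i true * disp i M2 m2).
  (* [det (I - A)] in terms of the row sums [r i] of [A]. *)
  assert (Hgap : (1 - A11) * (1 - A22) - A12 * A21
                 = (1 - r true) * (1 - r false) + A12 * (1 - r false) + A21 * (1 - r true)).
  { unfold r, A11, A12, A21, A22, lin_two_step, lin_step, disp; simpl; ring. }
  assert (M2 <= 1) by exact (Hle true false). assert (m2 <= 1) by exact (Hle false false).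
  assert (Hdisp : forall i, 0 < disp i M2 m2 <= 1).
  { intro i. pose proof (to1_bounds i). unfold disp; split; nra. }
  assert (Hdisp_lt : forall i, M2 < 1 \/ m2 < 1 -> disp i M2 m2 < 1).
  { intros i Hlt2. pose proof (to1_bounds i). unfold disp; destruct Hlt2; nra. }
  assert (Hr_lt : forall i, mean i true < 1 \/ disp i M2 m2 < 1 -> r i < 1).
  { intros i Hlt1. pose proof (Hle i true). pose proof (mean_pos i true). pose proof (Hdisp i).
    unfold r; destruct Hlt1; nra. }
  assert (Hr : forall i, r i <= 1).
  { intro i. unfold r. pose proof (Hle i true). pose proof (mean_pos i true).
    pose proof (Hdisp i). nra. }
  assert (Hstrict : r true < 1 \/ r false < 1).
  { destruct i0, e0; simpl in Hlt; [left | left | right | left]; apply Hr_lt; auto. }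
  pose proof A12_pos. pose proof A21_pos. pose proof (Hr true). pose proof (Hr false).
  assert (0 <= (1 - r true) * (1 - r false)) by (apply Rmult_le_pos; lra).
  destruct Hstrict; nra.
Qed.

(* Since [(1 - A22, A12) (I - A) = (det (I - A), 0)], one two-step iteration
   lowers [(1 - A22) u1 + A12 u2] by [det (I - A) u1] to first order, and by
   the quadratic defects [c] (with [u >= delta] and [step _ false u >= beta])
   to second order. *)
Definition decrement (c : bool -> bool -> R) (delta beta : R) : R :=
  ((1 - A11) * (1 - A22) - A12 * A21) * delta
  + (1 - A22) * (lin_step true true (c true false * delta ^ 2) (c false false * delta ^ 2)
                 + c true true * beta ^ 2)
  + A12 * (lin_step false true (c true false * delta ^ 2) (c false false * delta ^ 2)
           + c false true * beta ^ 2).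

Lemma potential_decreases c delta beta u1 u2 :
  (forall i e, 0 <= c i e /\
     forall h, 0 <= h <= 1 -> surv (L i e) h <= mean i e * h - c i e * h ^ 2) ->
  (forall i h, delta <= h <= 1 -> beta <= surv (L i false) h) ->
  0 < delta -> 0 < beta -> A22 < 1 -> A12 * A21 <= (1 - A11) * (1 - A22) ->
  delta <= u1 <= 1 -> delta <= u2 <= 1 ->
  (1 - A22) * two_step true u1 u2 + A12 * two_step false u1 u2
  <= (1 - A22) * u1 + A12 * u2 - decrement c delta beta.
Proof.
  intros Hc Hbeta Hdelta Hb Hd Hdet H1 H2.
  set (y := fun j => step j false u1 u2).
  assert (Hy : forall j, beta <= y j <= 1).
  { intro j. split; [apply Hbeta, disp_bounds; auto | apply step_bounds; lra]. }
  assert (Hy' : forall j, y j <= lin_step j false u1 u2 - c j false * delta ^ 2)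
    by (intro j; apply step_le_lin_step_sub; try apply Hc; lra).
  assert (Hz : forall i, two_step i u1 u2 <= lin_two_step i u1 u2
             - lin_step i true (c true false * delta ^ 2) (c false false * delta ^ 2) - c i true * beta ^ 2).
  { intro i. unfold two_step. fold (y true) (y false).
    pose proof (step_le_lin_step_sub i true (c i true) beta (y true) (y false)
                  (proj1 (Hc i true)) (proj2 (Hc i true)) ltac:(lra) (Hy true) (Hy false)).
    assert (lin_step i true (y true) (y false)
            <= lin_step i true (lin_step true false u1 u2 - c true false * delta ^ 2)
                               (lin_step false false u1 u2 - c false false * delta ^ 2)).
    { unfold lin_step at 1 2. pose proof (mean_pos i true).
      apply Rmult_le_compat_l; [lra | apply disp_le_compat; apply Hy']. }
    assert (lin_step i true (lin_step true false u1 u2 - c true false * delta ^ 2)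
                            (lin_step false false u1 u2 - c false false * delta ^ 2)
            = lin_two_step i u1 u2 - lin_step i true (c true false * delta ^ 2) (c false false * delta ^ 2))
      by (unfold lin_two_step, lin_step, disp; destruct i; ring).
    lra. }
  destruct (lin_two_step_matrix u1 u2) as [E1 E2].
  pose proof A12_pos.
  assert ((1 - A22) * two_step true u1 u2 <= (1 - A22) * (A11 * u1 + A12 * u2
             - lin_step true true (c true false * delta ^ 2) (c false false * delta ^ 2)
             - c true true * beta ^ 2))
    by (apply Rmult_le_compat_l; [lra | rewrite <- E1; apply Hz]).
  assert (A12 * two_step false u1 u2 <= A12 * (A21 * u1 + A22 * u2
             - lin_step false true (c true false * delta ^ 2) (c false false * delta ^ 2)
             - c false true * beta ^ 2))
    by (apply Rmult_le_compat_l; [lra | rewrite <- E2; apply Hz]).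
  assert (((1 - A11) * (1 - A22) - A12 * A21) * delta <= ((1 - A11) * (1 - A22) - A12 * A21) * u1)
    by (apply Rmult_le_compat_l; lra).
  unfold decrement. lra.
Qed.

Lemma decrement_pos c delta beta :
  (forall i e, 0 <= c i e) -> 0 < delta -> 0 < beta -> A22 < 1 ->
  A12 * A21 <= (1 - A11) * (1 - A22) ->
  A12 * A21 < (1 - A11) * (1 - A22) \/ (exists i e, 0 < c i e) ->
  0 < decrement c delta beta.
Proof.
  intros Hc Hdelta Hb Hd Hdet Hstrict.
  pose proof A12_pos.
  assert (Hsq : forall x e, 0 < x -> 0 <= e -> 0 <= e * x ^ 2 /\ (0 < e -> 0 < e * x ^ 2)).
  { intros x e Hx He. pose proof (pow_lt x 2 Hx).
    split; [apply Rmult_le_pos | intro; apply Rmult_lt_0_compat]; lra. }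
  assert (Hcd : forall i e, 0 <= c i e * delta ^ 2) by (intros; apply Hsq; auto).
  set (l := fun i => lin_step i true (c true false * delta ^ 2) (c false false * delta ^ 2)).
  assert (Hl : forall i, 0 <= l i) by (intro; apply lin_step_nonneg; apply Hcd).
  assert (Hl_pos : forall i, 0 < c true false \/ 0 < c false false -> 0 < l i).
  { intros i Hpos. apply lin_step_pos; try apply Hcd.
    pose proof (Hcd true false). pose proof (Hcd false false).
    destruct Hpos as [Hpos | Hpos]; apply (Hsq delta) in Hpos; auto; lra. }
  set (T0 := ((1 - A11) * (1 - A22) - A12 * A21) * delta).
  set (T1 := l true + c true true * beta ^ 2).
  set (T2 := l false + c false true * beta ^ 2).
  assert (Hdecr : decrement c delta beta = T0 + (1 - A22) * T1 + A12 * T2) by reflexivity.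
  assert (HT0 : 0 <= T0) by (apply Rmult_le_pos; lra).
  assert (HT1 : 0 <= T1)
    by (unfold T1; pose proof (Hl true); pose proof (proj1 (Hsq beta _ Hb (Hc true true))); lra).
  assert (HT2 : 0 <= T2)
    by (unfold T2; pose proof (Hl false); pose proof (proj1 (Hsq beta _ Hb (Hc false true))); lra).
  assert (Hpos : 0 < T0 \/ 0 < T1 \/ 0 < T2).
  { unfold T1, T2. destruct Hstrict as [Hlt | [[] [[] Hpos]]].
    - left. apply Rmult_lt_0_compat; lra.
    - right; left. pose proof (proj2 (Hsq beta _ Hb (Hc true true)) Hpos). pose proof (Hl true). lra.
    - right; left. pose proof (Hl_pos true (or_introl Hpos)).
      pose proof (proj1 (Hsq beta _ Hb (Hc true true))). lra.
    - right; right. pose proof (proj2 (Hsq beta _ Hb (Hc false true)) Hpos). pose proof (Hl false). lra.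
    - right; left. pose proof (Hl_pos true (or_intror Hpos)).
      pose proof (proj1 (Hsq beta _ Hb (Hc true true))). lra. }
  rewrite Hdecr.
  assert (0 <= (1 - A22) * T1) by (apply Rmult_le_pos; lra).
  assert (0 <= A12 * T2) by (apply Rmult_le_pos; lra).
  destruct Hpos as [Hp0 | [Hp1 | Hp2]]; [lra | |].
  - assert (0 < (1 - A22) * T1) by (apply Rmult_lt_0_compat; lra). lra.
  - assert (0 < A12 * T2) by (apply Rmult_lt_0_compat; lra). lra.
Qed.

Lemma supercritical_of_persists : ~ (forall i e, L i e 1%nat = 1) ->
  (forall i, persists L p q i) -> A11 + A22 > Rmin 2 (1 + (A11 * A22 - A12 * A21)).
Proof.
  intros Hnot Hpers.
  destruct (Rlt_le_dec (Rmin 2 (1 + (A11 * A22 - A12 * A21))) (A11 + A22)) as [|Hsub];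
    [assumption | exfalso].
  destruct (subcritical_of_not_supercritical _ _ _ _ A12_pos A21_pos Hsub) as [Ha [Hd Hdet]].
  destruct (Hpers true) as [d1 [Hd1 P1]]. destruct (Hpers false) as [d2 [Hd2 P2]].
  pose proof (Rmin_l d1 d2). pose proof (Rmin_r d1 d2).
  set (delta := Rmin d1 d2) in *.
  assert (Hsurv : forall i n, delta <= 1 - extinct i n 0 <= 1).
  { intros [] n; [pose proof (P1 n) | pose proof (P2 n)];
      pose proof (extinct_bounds true n 0); pose proof (extinct_bounds false n 0);
      unfold extinct in *; simpl in *; lra. }
  assert (Hdelta : 0 < delta <= 1)
    by (pose proof (Hsurv true 0%nat); split; [apply Rmin_glb_lt|]; lra).
  destruct (surv_ge_pos_uniform delta Hdelta) as [beta [Hb Hbeta]].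
  destruct surv_quadratic_bound_uniform as [c Hc].
  (* With no quadratic defect, every law is concentrated on [0] and [1] with
     mean [L i e 1 <= 1], and not all of these means equal [1]. *)
  assert (Hstrict : A12 * A21 < (1 - A11) * (1 - A22) \/ exists i e, 0 < c i e).
  { destruct (classic (exists i e, 0 < c i e)) as [|Hnone]; [right; assumption | left].
    assert (Hlin : forall i e, mean i e = L i e 1%nat /\ L i e 1%nat <= 1).
    { intros i e. destruct (Hc i e) as [_ [_ [Hci | Hlin]]]; [exfalso; eauto | exact Hlin]. }
    apply det_gap_pos.
    - intros i e. destruct (Hlin i e). lra.
    - apply NNPP. intro Hall. apply Hnot. intros i e. destruct (Hlin i e).
      destruct (Rlt_or_le (mean i e) 1); [exfalso; eauto | lra]. }
  apply (nonneg_not_decreasing_by (decrement c delta beta)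
           (fun n => (1 - A22) * (1 - extinct true (2 * n) 0) + A12 * (1 - extinct false (2 * n) 0))).
  - apply decrement_pos; try lra; [intros i e; apply Hc | exact Hstrict].
  - intro n. pose proof A12_pos.
    pose proof (Hsurv true (2 * n)%nat). pose proof (Hsurv false (2 * n)%nat).
    assert (0 <= (1 - A22) * (1 - extinct true (2 * n) 0)) by (apply Rmult_le_pos; lra).
    assert (0 <= A12 * (1 - extinct false (2 * n) 0)) by (apply Rmult_le_pos; lra). lra.
  - intro n. replace (2 * S n)%nat with (S (S (2 * n))) by lia. rewrite !survival_two_step.
    apply potential_decreases; try lra; try apply Hsurv.
    + intros i e. split; apply Hc.
    + intros i h. apply Hbeta.
Qed.

Lemma persists_iff_supercritical : ~ (forall i e, L i e 1%nat = 1) ->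
  ((forall i, persists L p q i) <-> A11 + A22 > Rmin 2 (1 + (A11 * A22 - A12 * A21))).
Proof.
  intros Hnot. split; [apply supercritical_of_persists, Hnot | apply persists_of_supercritical].
Qed.
End Metapopulation.

Theorem theorem5p1 (L : bool -> bool -> nat -> R) (p q M1 M2 m1 m2 : R) :
  0 < p < 1 -> 0 < q < 1 ->
  (forall i e, is_law (L i e)) ->
  has_mean (L true true) M1 -> has_mean (L true false) M2 ->
  has_mean (L false true) m1 -> has_mean (L false false) m2 ->
  0 < M1 -> 0 < M2 -> 0 < m1 -> 0 < m2 ->
  ~ (forall i e, L i e 1%nat = 1) ->
  ((forall i, persists L p q i) <->
   M1 * M2 * (1 - p) ^ 2 + (M1 * m2 + m1 * M2) * p * q + m1 * m2 * (1 - q) ^ 2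
   > Rmin 2 (1 + M1 * M2 * m1 * m2 * (1 - p - q) ^ 2)).
Proof.
  intros Hp Hq Hlaw HM1 HM2 Hm1 Hm2 PM1 PM2 Pm1 Pm2 Hnot.
  replace (M1 * M2 * (1 - p) ^ 2 + (M1 * m2 + m1 * M2) * p * q + m1 * m2 * (1 - q) ^ 2)
    with (A11 p q M1 M2 m1 m2 + A22 p q M1 M2 m1 m2)
    by (unfold A11, A22, lin_two_step, lin_step, disp, mean; simpl; ring).
  replace (M1 * M2 * m1 * m2 * (1 - p - q) ^ 2)
    with (A11 p q M1 M2 m1 m2 * A22 p q M1 M2 m1 m2 - A12 p q M1 M2 m1 m2 * A21 p q M1 M2 m1 m2)
    by (unfold A11, A12, A21, A22, lin_two_step, lin_step, disp, mean; simpl; ring).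
  apply persists_iff_supercritical; assumption.
Qed.
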